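(* Let $W$ be an $n\times n$ row-stochastic matrix with node set $V=\{1,\dots,n\}$, and let $M\subseteq V$ be a nonempty cohesive set. Then exactly one of the following holds: (a) $\mathrm{Expansion}(M)=V$; (b) both $\mathrm{Expansion}(M)$ and $V\setminus\mathrm{Expansion}(M)$ are nonempty maximal cohesive sets.
   Context: A matrix $W=(w_{ij})_{n\times n}$ is row-stochastic if $w_{ij}\ge 0$ for all $i,j$ and $\sum_{j=1}^n w_{ij}=1$ for every $i$. A set $M\subseteq V$ is cohesive if $\sum_{j\in M} w_{ij}\ge 1/2$ for every $i\in M$. A cohesive set $M$ is maximal cohesive if there is no $i\in V\setminus M$ with $\sum_{j\in M} w_{ij}>1/2$. The cohesive expansion of $M\subseteq V$ is produced by the following procedure. Set $M_0=M$. For $k=0,1,2,\dots$: if there exists $i\in V\setminus M_k$ with $\sum_{j\in M_k} w_{ij}>1/2$, choose any such $i$ and set $M_{k+1}=M_k\cup\{i\}$. If no such $i$ exists, stop and output $M_k$. The output is denoted $\mathrm{Expansion}(M)$. It does not depend on the choices made. *)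

From HB Require Import structures.
From mathcomp Require Import all_boot all_order all_algebra.
Set Implicit Arguments. Unset Strict Implicit. Unset Printing Implicit Defensive.
Import Order.TTheory GRing.Theory Num.Theory.
Local Open Scope ring_scope.

Section Defs.
Variables (R : realFieldType) (n : nat).
Implicit Types (W : 'M[R]_n) (M : {set 'I_n}).

Definition row_stochastic W : Prop :=
  (forall i j, 0 <= W i j) /\ (forall i, \sum_(j < n) W i j = 1).

Definition wsum W (i : 'I_n) M : R := \sum_(j in M) W i j.

Definition cohesive W M : Prop :=
  forall i, i \in M -> 1 / 2%:R <= wsum W i M.

Definition maximal_cohesive W M : Prop :=
  cohesive W M /\ ~ (exists i, i \notin M /\ 1 / 2%:R < wsum W i M).

Definition expansion_step W M : {set 'I_n} :=
  match [pick i | (i \notin M) && (1 / 2%:R < wsum W i M)] with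
  | Some i => i |: M
  | None => M
  end.

(* Each effective step adds a new node, so after n steps the procedure has
   stopped (further steps are identity). *)
Definition Expansion W M : {set 'I_n} := iter n (expansion_step W) M.
End Defs.

From HB Require Import structures.
From mathcomp Require Import all_boot all_order all_algebra.
From mathcomp Require Import lra.
Import Order.TTheory GRing.Theory Num.Theory.
Local Open Scope ring_scope.
Set Implicit Arguments.

(* Expansion W M is a fixed point of the expansion step (each effective step
   adds a node, so n steps suffice) and stays cohesive, hence it is maximal
   cohesive.  Since rows sum to 1, a set is maximal cohesive exactly when its
   complement is: nodes inside put at least 1/2 inside, and nodes outside put
   at most 1/2 inside.  So E and V \ E are both maximal cohesive, and V \ E is
   empty precisely in case (a). *)

Section Expansion.
Variables (R : realFieldType) (n : nat) (W : 'M[R]_n).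
Hypothesis HW : row_stochastic W.

Lemma wsum_setC i (A : {set 'I_n}) : wsum W i (~: A) = 1 - wsum W i A.
Proof.
rewrite /wsum -(proj2 HW i) [\sum_(j < n) _](bigID [in A]) /= addrC addrK.
by apply: eq_bigl => j; rewrite inE.
Qed.

Lemma wsum_subset i (A B : {set 'I_n}) : A \subset B -> wsum W i A <= wsum W i B.
Proof.
move=> sAB; rewrite /wsum [X in _ <= X](bigID (mem A)) /=.
have -> : \sum_(j in B | j \in A) W i j = \sum_(j in A) W i j.
  by apply: eq_bigl => j; rewrite andb_idl // => /(subsetP sAB).
by rewrite lerDl sumr_ge0 // => j _; apply: (proj1 HW).
Qed.

Lemma maximal_cohesive_setC (A : {set 'I_n}) :
  maximal_cohesive W A -> maximal_cohesive W (~: A).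
Proof.
move=> [cohA maxA]; split.
  move=> i; rewrite inE wsum_setC => iNA.
  have : ~ 1 / 2%:R < wsum W i A by move=> gt_half; apply: maxA; exists i.
  by move/negP; rewrite -leNgt => le_half; lra.
move=> [i []]; rewrite inE negbK wsum_setC => /cohA; lra.
Qed.

Lemma subset_expansion_step (A : {set 'I_n}) : A \subset expansion_step W A.
Proof. by rewrite /expansion_step; case: pickP => [i _|_] //; apply: subsetUr. Qed.

Lemma cohesive_expansion_step (A : {set 'I_n}) :
  cohesive W A -> cohesive W (expansion_step W A).
Proof.
rewrite /expansion_step; case: pickP => [i /andP[_ gt_half]|_] // cohA j.
have sAiA := subsetUr [set i] A.
rewrite !inE => /orP[/eqP->|jA].
  exact/ltW/(lt_le_trans gt_half)/wsum_subset.
exact: le_trans (cohA j jA) (wsum_subset _ sAiA).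
Qed.

Lemma expansion_step_fixed_or_card (A : {set 'I_n}) :
  expansion_step W A = A \/ #|expansion_step W A| = #|A|.+1.
Proof.
rewrite /expansion_step; case: pickP => [i /andP[iNA _]|_]; last by left.
by right; rewrite cardsU1 iNA.
Qed.

Lemma expansion_step_fixed_no_extension (A : {set 'I_n}) :
  expansion_step W A = A -> ~ exists i, i \notin A /\ 1 / 2%:R < wsum W i A.
Proof.
rewrite /expansion_step; case: pickP => [i /andP[iNA _] fixA|noext _ [i [iNA gt_half]]].
  by move: iNA; rewrite -fixA setU11.
by have := noext i; rewrite iNA gt_half.
Qed.

Lemma iter_expansion_step_fixed_or_card (A : {set 'I_n}) k :
  let X := iter k (expansion_step W) A in
  expansion_step W X = X \/ #|X| = (#|A| + k)%N.
Proof.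
elim: k => [|k IHk] /=; first by right; rewrite addn0.
case: IHk => [fixX|cardX]; first by left; rewrite !fixX.
case: (expansion_step_fixed_or_card (iter k (expansion_step W) A)) => [fixX|->].
  by left; rewrite !fixX.
by right; rewrite cardX addnS.
Qed.

Lemma expansion_step_Expansion (A : {set 'I_n}) :
  expansion_step W (Expansion W A) = Expansion W A.
Proof.
case: (expansion_step_fixed_or_card (Expansion W A)) => // card_step.
case: (iter_expansion_step_fixed_or_card A n) => // cardE.
have := max_card (mem (expansion_step W (Expansion W A))).
by rewrite card_ord card_step /Expansion cardE ltnNge leq_addl.
Qed.

Lemma subset_Expansion (A : {set 'I_n}) : A \subset Expansion W A.
Proof.
suff sub_iter k : A \subset iter k (expansion_step W) A by apply: sub_iter.
elim: k => // k IHk; exact: subset_trans IHk (subset_expansion_step _).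
Qed.

Lemma cohesive_Expansion (A : {set 'I_n}) :
  cohesive W A -> cohesive W (Expansion W A).
Proof.
move=> cohA; suff coh_iter k : cohesive W (iter k (expansion_step W) A) by apply: coh_iter.
by elim: k => // k IHk; apply: cohesive_expansion_step.
Qed.

Lemma maximal_cohesive_Expansion (A : {set 'I_n}) :
  cohesive W A -> maximal_cohesive W (Expansion W A).
Proof.
move=> cohA; split; first exact: cohesive_Expansion.
exact/expansion_step_fixed_no_extension/expansion_step_Expansion.
Qed.

End Expansion.

Theorem lemmaA1 (R : realFieldType) (n : nat) (W : 'M[R]_n) (M : {set 'I_n})
  (HW : row_stochastic W) (HM0 : M != set0) (HM : cohesive W M) :
  let E := Expansion W M in
  (E = [set: 'I_n] /\
     ~ (E != set0 /\ ~: E != set0 /\ maximal_cohesive W E /\ maximal_cohesive W (~: E)))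
  \/
  (E <> [set: 'I_n] /\
     (E != set0 /\ ~: E != set0 /\ maximal_cohesive W E /\ maximal_cohesive W (~: E))).
Proof.
move=> E.
have maxE : maximal_cohesive W E := maximal_cohesive_Expansion HW HM.
have E_neq0 : E != set0.
  by apply: contraNneq HM0 => E0; rewrite -subset0 -E0 subset_Expansion.
case: (eqVneq E [set: 'I_n]) => [ET|E_neqT].
  by left; split=> // -[_ []]; rewrite ET setCT eqxx.
right; split; first exact/eqP.
split=> //; split.
  by apply: contra_neq E_neqT => /(congr1 (@setC _)); rewrite setCK setC0.
by split=> //; apply: maximal_cohesive_setC.
Qed.
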